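(* For every $k\in\mathbb{N}$ and $w\in\mathbb{W}_k$, the bridge $(U_0^w,\dots,U_k^w)$ from the empty word to $w$ satisfies, for all $0\le m\le k-1$, $v\in\mathbb{W}_{m+1}$ (with $\mathbb{P}\{U_{m+1}^w=v\}>0$) and $u\in\mathbb{W}_m$, \[ \mathbb{P}\{U_m^{w} = u \mid U_{m+1}^{w} = v\} = \frac{\binom{v}{u}}{(m+1)^2}. \] In particular the backward transition dynamics of all bridges from the empty word are the same and consist of removing, at each step, one letter $a$ and one letter $b$ chosen uniformly at random (independently) from the current word.
   Context: For $n \in \mathbb{N}_0$, $\mathbb{W}_n$ denotes the set of words over the alphabet $\{a,b\}$ with exactly $n$ letters $a$ and $n$ letters $b$, and $\mathbb{W} := \bigsqcup_{n} \mathbb{W}_n$. For words $w,v$, $\binom{w}{v}$ denotes the number of occurrences of $v$ as a (not necessarily contiguous) sub-word of $w$. The Markov chain $(U_n)_{n\in\mathbb{N}_0}$ on $\mathbb{W}$ starts at the empty word; given $U_n \in \mathbb{W}_n$, first a letter $a$ is inserted uniformly at random into one of the $2n+1$ slots of $U_n$, then a letter $b$ is inserted uniformly at random into one of the $2n+2$ slots of the resulting word, giving $U_{n+1}$. For $w\in\mathbb{W}_k$, the bridge $(U_0^w,\dots,U_k^w)$ is the process $(U_0,\dots,U_k)$ conditioned on the event $\{U_k=w\}$. *)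

From mathcomp Require Import all_boot all_order all_algebra.
Set Implicit Arguments. Unset Strict Implicit. Unset Printing Implicit Defensive.
Import Order.TTheory GRing.Theory Num.Theory.

Definition letter_a : bool := true.
Definition letter_b : bool := false.

Definition inW (n : nat) (s : seq bool) : bool :=
  (count (pred1 letter_a) s == n) && (count (pred1 letter_b) s == n).

(* binom v u : number of occurrences of u as a (not necessarily contiguous)
   subword of v, i.e. number of selection masks picking u out of v. *)
Definition subword_count (v u : seq bool) : nat :=
  #|[set m : (size v).-tuple bool | mask m v == u]|.

Definition ins (x : bool) (i : nat) (s : seq bool) : seq bool :=
  take i s ++ x :: drop i s.

(* Sample space for (U_0,...,U_k): at step n < k a slot for a (in 0..2n)
   and a slot for b (in 0..2n+1) are chosen; outcomes are encoded as
   finite functions, restricted to the valid ones, with uniform measure. *)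
Definition Omega (k : nat) := {ffun 'I_k -> 'I_(2 * k) * 'I_(2 * k)}.

Definition valid (k : nat) (c : Omega k) : bool :=
  [forall n : 'I_k, ((c n).1 <= 2 * n) && ((c n).2 <= 2 * n + 1)].

Definition choice_at (k : nat) (c : Omega k) (n : nat) : nat * nat :=
  match @insub nat (fun j => j < k) _ n with
  | Some i => (val (c i).1, val (c i).2)
  | None => (0, 0)
  end.

Fixpoint U (k : nat) (c : Omega k) (n : nat) : seq bool :=
  match n with
  | 0 => [::]
  | n'.+1 => ins letter_b (choice_at c n').2
                 (ins letter_a (choice_at c n').1 (U c n'))
  end.

Definition Prob (k : nat) (E : pred (Omega k)) : rat :=
  (#|[set c : Omega k | valid c && E c]|%:R
     / #|[set c : Omega k | valid c]|%:R)%R.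

Definition CondProb (k : nat) (E F : pred (Omega k)) : rat :=
  (Prob (fun c => E c && F c) / Prob F)%R.

From mathcomp Require Import all_boot all_order all_algebra.
From mathcomp Require Import zify ring.
Import GRing.Theory Num.Theory.
Set Implicit Arguments. Unset Strict Implicit. Unset Printing Implicit Defensive.

(* A run of the chain up to time k is a schedule of k pairs of insertion slots,
   all schedules being equally likely.  Every word of W_n is built by exactly
   (n!)^2 schedules: going back one step from v in W_(n+1), each of the
   (n+1)^2 ways of deleting one a and one b from v leads to a word of W_n.
   The number of slot pairs turning u in W_m into v in W_(m+1) is binom(v,u),
   because the masks selecting u inside v are exactly the masks dropping the
   two inserted letters.  Splitting schedules at times m and m+1, those passing
   through u, v, w at times m, m+1, k number (m!)^2 binom(v,u) C, and those
   passing through v, w number ((m+1)!)^2 C, where C counts the continuations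
   from v to w; the ratio is binom(v,u)/(m+1)^2. *)

Definition delete (i : nat) (s : seq bool) := take i s ++ drop i.+1 s.

Lemma size_ins x i s : size (ins x i s) = (size s).+1.
Proof. by rewrite /ins size_cat /= size_take size_drop; case: ltnP; lia. Qed.

Lemma size_delete i s : i < size s -> size (delete i s) = (size s).-1.
Proof. by move=> lt_i; rewrite /delete size_cat size_take size_drop lt_i; lia. Qed.

Lemma delete_ins x i s : i <= size s -> delete i (ins x i s) = s.
Proof.
move=> le_i; rewrite /delete /ins take_size_cat ?size_takel //.
by rewrite drop_cat size_takel // ltnNge leqnSn /= subSn // subnn /= drop0 cat_take_drop.
Qed.

Lemma nth_ins_at x i s : i <= size s -> nth false (ins x i s) i = x.
Proof. by move=> le_i; rewrite /ins nth_cat size_takel // ltnn subnn. Qed.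

Lemma nth_ins x i s t : i <= size s -> nth false (ins x i s) t =
  if t < i then nth false s t else if t == i then x else nth false s t.-1.
Proof.
move=> le_i; rewrite /ins nth_cat size_takel //.
case: ltnP => [lt_ti|le_it]; first by rewrite nth_take.
case: eqP => [->|ne_ti]; first by rewrite subnn.
have -> : t - i = (t - i).-1.+1 by lia.
by rewrite /= nth_drop; congr nth; lia.
Qed.

Lemma ins_nth_delete i s : i < size s -> ins (nth false s i) i (delete i s) = s.
Proof.
move=> lt_i; have size_take_i := size_takel (ltnW lt_i).
rewrite /ins /delete take_size_cat // drop_size_cat // -(drop_nth false lt_i).
by rewrite cat_take_drop.
Qed.

Lemma ins_eqE x i s v : i <= size s ->
  (ins x i s == v) = [&& i < size v, nth false v i == x & delete i v == s].
Proof.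
move=> le_i; apply/eqP/and3P => [<-|[lt_i /eqP <- /eqP <-]].
  by rewrite size_ins ltnS nth_ins_at ?delete_ins.
exact: ins_nth_delete.
Qed.

Lemma count_delete (P : pred bool) i s : i < size s ->
  count P s = P (nth false s i) + count P (delete i s).
Proof.
move=> lt_i; rewrite -{1}(ins_nth_delete lt_i) /ins /delete.
by rewrite !count_cat /= take_size_cat ?drop_size_cat ?size_takel 1?ltnW //; lia.
Qed.

Lemma sum_count (T : Type) (P : pred T) s : \sum_(x <- s) P x = count P s.
Proof. by rewrite -sumn_count sumnE big_map. Qed.

Lemma sum_nth_eq (s : seq bool) x :
  \sum_(0 <= i < size s) (nth false s i == x) = count (pred1 x) s.
Proof. by rewrite -(big_nth false xpredT (fun y => nat_of_bool (y == x))) sum_count. Qed.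

Definition step (x : seq bool) (p : nat * nat) :=
  ins letter_b p.2 (ins letter_a p.1 x).

(* Read backwards: the b inserted last sits at [p.2] in [v], the a at [p.1]
   once that b is deleted. *)
Definition removable (v : seq bool) (p : nat * nat) :=
  [&& p.2 < size v, nth false v p.2 == letter_b,
      p.1 < size (delete p.2 v) & nth false (delete p.2 v) p.1 == letter_a].

Definition unstep (v : seq bool) (p : nat * nat) := delete p.1 (delete p.2 v).

Lemma step_eqE x p v : p.1 <= size x -> p.2 <= (size x).+1 ->
  (step x p == v) = removable v p && (unstep v p == x).
Proof.
case: p => i j /= le_i le_j; rewrite /step /removable /unstep /=.
rewrite ins_eqE ?size_ins //; case: (j < size v) => //=; case: (_ == letter_b) => //=.
by rewrite eq_sym ins_eqE // andbA.
Qed.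

Lemma inW_count n x : inW n x ->
  count (pred1 letter_a) x = n /\ count (pred1 letter_b) x = n.
Proof. by case/andP => /eqP -> /eqP ->. Qed.

Lemma size_inW n x : inW n x -> size x = 2 * n.
Proof.
case/inW_count => ca cb; rewrite -(count_predC (pred1 letter_a)) ca.
by rewrite (@eq_count _ _ (pred1 letter_b)) ?cb //; [lia | case].
Qed.

Lemma unstep_inW n v p : inW n.+1 v -> removable v p -> inW n (unstep v p).
Proof.
case: p => i j /inW_count [ca cb] /and4P [/= lt_j /eqP vj lt_i /eqP vi].
move: ca cb; rewrite /inW /unstep !(count_delete _ lt_j) !(count_delete _ lt_i) vj vi /=.
by move=> ca cb; apply/andP; split; apply/eqP; lia.
Qed.

Definition slots (n : nat) : seq (nat * nat) :=
  [seq (i, j) | i <- index_iota 0 (2 * n).+1, j <- index_iota 0 (2 * n).+2].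

Fixpoint schedules (s n : nat) : seq (seq (nat * nat)) :=
  if n is n'.+1 then [seq p :: l | p <- slots s, l <- schedules s.+1 n']
  else [:: [::]].

Lemma schedulesS s n :
  schedules s n.+1 = [seq p :: l | p <- slots s, l <- schedules s.+1 n].
Proof. by []. Qed.

Definition run (x : seq bool) (l : seq (nat * nat)) := foldl step x l.

Definition build (l : seq (nat * nat)) := run [::] l.

Lemma build_rcons l p : build (rcons l p) = step (build l) p.
Proof. exact: foldl_rcons. Qed.

Lemma build_cat l1 l2 : build (l1 ++ l2) = run (build l1) l2.
Proof. exact: foldl_cat. Qed.

Lemma mem_slots p n : (p \in slots n) = (p.1 <= 2 * n) && (p.2 <= (2 * n).+1).
Proof.
case: p => i j; rewrite /slots; apply/allpairsP/andP => /= [[[a b] /= [ha hb [-> ->]]]|[hi hj]].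
  by rewrite !mem_index_iota in ha hb; lia.
by exists (i, j); rewrite !mem_index_iota; split => //; lia.
Qed.

Lemma uniq_slots n : uniq (slots n).
Proof.
rewrite /slots; apply: allpairs_uniq; try exact: iota_uniq.
by case=> [a b] [c d] _ _ /= [-> ->].
Qed.

Lemma uniq_schedules s n : uniq (schedules s n).
Proof.
elim: n s => [|n IHn] s //; apply: allpairs_uniq => //; first exact: uniq_slots.
by case=> [a b] [c d] _ _ /= [-> ->].
Qed.

Lemma mem_schedules_cons s n p l :
  (p :: l \in schedules s n.+1) = (p \in slots s) && (l \in schedules s.+1 n).
Proof.
apply/allpairsP/andP => [[[q l'] /= [hq hl' [-> ->]]] //|[hp hl]].
by exists (p, l).
Qed.

Lemma size_schedules s n l : l \in schedules s n -> size l = n.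
Proof.
elim: n s l => [|n IHn] s [|p l] //.
- by case/allpairsP => -[q l'] [].
- by rewrite mem_schedules_cons => /andP [_ /IHn <-].
Qed.

Lemma schedulesP s l : reflect (forall t, t < size l -> nth (0, 0) l t \in slots (s + t))
  (l \in schedules s (size l)).
Proof.
elim: l s => [|p l IHl] s /=; first by rewrite inE; apply: ReflectT.
rewrite mem_schedules_cons; apply: (iffP andP) => [[hp /IHl hl] [|t] //= lt_t|hl].
  by rewrite addn0.
  by rewrite -addSnnS hl.
split; first by have := hl 0 isT; rewrite addn0.
by apply/IHl => t lt_t; rewrite addSnnS; exact: (hl t.+1).
Qed.

Lemma big_schedules_cat (F : seq (nat * nat) -> nat) s a b :
  \sum_(l <- schedules s (a + b)) F l =
  \sum_(l1 <- schedules s a) \sum_(l2 <- schedules (s + a) b) F (l1 ++ l2).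
Proof.
elim: a s F => [|a IHa] s F; first by rewrite big_seq1 addn0.
rewrite addSn !schedulesS [LHS]big_allpairs_dep [RHS]big_allpairs_dep.
apply: eq_bigr => p _.
by rewrite IHa; apply: eq_bigr => l1 _; rewrite addSnnS.
Qed.

Lemma big_schedules1 (F : seq (nat * nat) -> nat) s :
  \sum_(l <- schedules s 1) F l = \sum_(p <- slots s) F [:: p].
Proof. by rewrite schedulesS big_allpairs_dep; apply: eq_bigr => p _; rewrite big_seq1. Qed.

Lemma big_schedulesSr (F : seq (nat * nat) -> nat) s n :
  \sum_(l <- schedules s n.+1) F l =
  \sum_(l <- schedules s n) \sum_(p <- slots (s + n)) F (rcons l p).
Proof.
rewrite -addn1 big_schedules_cat; apply: eq_bigr => l _.
by rewrite big_schedules1; apply: eq_bigr => p _; rewrite cats1.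
Qed.

Lemma size_run x l : size (run x l) = size x + 2 * size l.
Proof.
elim: l x => [|p l IHl] x /=; first by rewrite addn0.
by rewrite IHl /step !size_ins; lia.
Qed.

Lemma size_build n l : l \in schedules 0 n -> size (build l) = 2 * n.
Proof. by move/size_schedules; rewrite size_run => ->. Qed.

Lemma sum_removable n v : inW n.+1 v -> \sum_(p <- slots n) removable v p = n.+1 ^ 2.
Proof.
move=> vW; have [ca cb] := inW_count vW.
have sv : size v = (2 * n).+2 by rewrite (size_inW vW); lia.
rewrite big_allpairs exchange_big /= -sv.
rewrite (eq_big_seq (fun j => (nth false v j == letter_b) * n.+1)) => [|j].
  by rewrite -big_distrl /= sum_nth_eq cb.
rewrite mem_index_iota => /= lt_j.
have sd : size (delete j v) = (2 * n).+1 by rewrite size_delete // sv.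
rewrite -sd (eq_big_seq (fun i =>
  (nth false v j == letter_b) * (nth false (delete j v) i == letter_a))) => [|i].
  rewrite -big_distrr /= sum_nth_eq; case: eqP => // vj.
  by move: ca; rewrite (count_delete _ lt_j) vj /= add0n !mul1n.
by rewrite mem_index_iota /removable /= lt_j => /= ->; rewrite mulnb.
Qed.

Definition npaths n x := \sum_(l <- schedules 0 n) (build l == x).

Definition nsteps n u v := \sum_(p <- slots n) (step u p == v).

Lemma npathsS n v :
  npaths n.+1 v = \sum_(p <- slots n) removable v p * npaths n (unstep v p).
Proof.
rewrite /npaths big_schedulesSr add0n big_seq.
rewrite (eq_bigr (fun l => \sum_(p <- slots n) removable v p * (build l == unstep v p)));
  last first.
  move=> l /size_build sl; apply: eq_big_seq => p.
  rewrite mem_slots build_rcons => /andP [le_i le_j].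
  by rewrite step_eqE ?sl // eq_sym mulnb.
by rewrite -big_seq exchange_big; apply: eq_bigr => p _; rewrite big_distrr.
Qed.

Lemma npaths_inW n x : inW n x -> npaths n x = n`! ^ 2.
Proof.
elim: n x => [|n IHn] v vW.
  by move: (size_inW vW) => /size0nil ->; rewrite /npaths big_seq1.
rewrite npathsS (eq_bigr (fun p => removable v p * n`! ^ 2)) => [|p _].
  by rewrite -big_distrl /= sum_removable // factS expnMn mulnC.
case rv: (removable v p); last by rewrite !mul0n.
by rewrite IHn ?(unstep_inW vW rv).
Qed.

Definition deletion_mask (n : nat) (p : nat * nat) :=
  ins false p.2 (ins false p.1 (nseq n.-2 true)).

Lemma size_deletion_mask n p : 2 <= n -> size (deletion_mask n p) = n.
Proof. by move=> n_ge2; rewrite /deletion_mask !size_ins size_nseq; lia. Qed.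

Lemma mask_ins (T s : seq bool) x i : size T = size s ->
  mask (ins false i T) (ins x i s) = mask T s.
Proof.
move=> sT; rewrite /ins mask_cat ?size_take ?sT //= -mask_cat ?size_take ?sT //.
by rewrite !cat_take_drop.
Qed.

Lemma mask_ins_delete (T s : seq bool) i : i < size s -> size T = (size s).-1 ->
  mask (ins false i T) s = mask T (delete i s).
Proof. by move=> lt_i sT; rewrite -{1}(ins_nth_delete lt_i) mask_ins ?size_delete. Qed.

Lemma mask_deletion_mask v p : removable v p ->
  mask (deletion_mask (size v) p) v = unstep v p.
Proof.
case: p => i j /and4P [/= lt_j _ lt_i _].
have sd : size (delete j v) = (size v).-1 by rewrite size_delete.
rewrite /deletion_mask mask_ins_delete //; last first.
  by rewrite size_ins size_nseq -sd (ltn_predK lt_i).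
rewrite /unstep /= mask_ins_delete //; last by rewrite size_nseq sd.
by rewrite mask_true // size_delete // sd.
Qed.

Lemma index_ins_false i n : i <= n -> index false (ins false i (nseq n true)) = i.
Proof.
move=> le_i; rewrite /ins index_cat size_takel ?size_nseq //.
have -> : (false \in take i (nseq n true)) = false.
  by apply/negbTE/negP => /mem_take; rewrite mem_nseq andbF.
by rewrite /= addn0.
Qed.

Lemma deletion_mask_letter_b v p t : removable v p -> t < size v ->
  nth false (deletion_mask (size v) p) t = false -> nth false v t = letter_b -> t = p.2.
Proof.
case: p => i j /and4P [/= lt_j _ lt_i /eqP vi] lt_t.
rewrite size_delete // in lt_i.
rewrite /deletion_mask !nth_ins ?size_ins ?size_nseq //= ?nth_nseq; try lia.
move=> dm_t; rewrite -(ins_nth_delete lt_j) nth_ins ?size_delete //; last lia.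
move: dm_t; case: (ltngtP t j) => [lt_tj|lt_jt|-> //].
  by case: (ltngtP t i) => [||->]; rewrite ?vi //; case: ifP => //; lia.
by case: (ltngtP t.-1 i) => [||->]; rewrite ?vi //; case: ifP => //; lia.
Qed.

Lemma deletion_mask_inj v :
  {in [pred p | removable v p] &, injective (deletion_mask (size v))}.
Proof.
move=> [i j] [i' j'] rv rv' eq_dm.
have /and4P [/= lt_j' /eqP vj' lt_i' _] := rv'.
have /and4P [/= lt_j _ lt_i _] := rv.
rewrite !size_delete // in lt_i lt_i'.
have ej : j' = j.
  apply: (deletion_mask_letter_b rv lt_j' _ vj').
  by rewrite eq_dm nth_ins_at //= size_ins size_nseq; lia.
subst j'; move: eq_dm => /(congr1 (delete j)).
rewrite /deletion_mask /= !delete_ins ?size_ins ?size_nseq; try lia.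
by move/(congr1 (index false)); rewrite !index_ins_false //; try lia; move->.
Qed.

Lemma count_mask_negb (P : pred bool) (T s : seq bool) : size T = size s ->
  count P (mask T s) + count P (mask (map negb T) s) = count P s.
Proof.
elim: s T => [|x s IHs] [|b T] //= [sT].
by case: b => /=; rewrite -(IHs _ sT); lia.
Qed.

Lemma mask_drop1_ins x (v T : seq bool) : size T = size v ->
  count id T + 1 = size v -> count (pred1 x) (mask (map negb T) v) = 1 ->
  exists2 q, q < size v /\ nth false v q = x & T = ins false q (nseq (size v).-1 true).
Proof.
elim: v T => [|y v IHv] [|b T] //= [sT].
case: b => /= cT dropped.
  have [q [lt_q vq] ->] := IHv T sT ltac:(lia) dropped.
  by exists q.+1; [split | case: (size v) lt_q].
have T_true : T = nseq (size v) true.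
  rewrite -sT; apply/all_pred1P; rewrite all_count (eq_count (a2 := id)) => [|[]] //.
  by move: cT; rewrite sT add0n addn1 => -[->].
move: dropped; rewrite T_true map_nseq mask_false /=; case: eqP => // yx _.
by exists 0; rewrite /ins ?take0 ?drop0.
Qed.

Lemma mask_drop2_deletion_mask (v T : seq bool) : size T = size v ->
  count id T + 2 = size v ->
  count (pred1 letter_a) (mask (map negb T) v) = 1 ->
  count (pred1 letter_b) (mask (map negb T) v) = 1 ->
  exists2 p, removable v p & T = deletion_mask (size v) p.
Proof.
elim: v T => [|y v IHv] [|b T] //= [sT].
case: b => /= cT dropped_a dropped_b.
  have [[i j] rv ->] := IHv T sT ltac:(lia) dropped_a dropped_b.
  exists (i.+1, j.+1); first by move: rv; rewrite /removable /delete /= !ltnS.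
  have : 2 <= size v by lia.
  by rewrite /deletion_mask; case: (size v) => // -[|n].
case: y dropped_a dropped_b => /= dropped_a dropped_b; rewrite ?add0n in dropped_a dropped_b.
  have [q [lt_q vq] ->] := mask_drop1_ins sT ltac:(lia) dropped_b.
  exists (0, q.+1).
    by rewrite /removable /delete /= vq ltnS lt_q.
  by rewrite /deletion_mask /ins /= take0 drop0.
have [q [lt_q vq] ->] := mask_drop1_ins sT ltac:(lia) dropped_a.
exists (q, 0).
  by rewrite /removable /delete /= drop0 vq lt_q eqxx.
by rewrite /deletion_mask /ins /= take0 drop0.
Qed.

Lemma nsteps_subword_count m u v : inW m u -> inW m.+1 v ->
  nsteps m u v = subword_count v u.
Proof.
move=> uW vW; have su := size_inW uW.
have sv : size v = (2 * m).+2 by rewrite (size_inW vW); lia.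
pose S := [seq p <- slots m | removable v p && (unstep v p == u)].
have -> : nsteps m u v = size S.
  rewrite size_filter -sum1_count big_mkcond; apply: eq_big_seq => p.
  rewrite mem_slots => /andP [le_i le_j].
  by rewrite step_eqE ?su //; case: (_ && _).
pose G p : (size v).-tuple bool := insubd [tuple of nseq (size v) true] (deletion_mask (size v) p).
have valG p : val (G p) = deletion_mask (size v) p.
  by rewrite val_insubd size_deletion_mask ?sv ?eqxx.
have uniq_GS : uniq (map G S).
  rewrite map_inj_in_uniq ?filter_uniq ?uniq_slots // => p q.
  rewrite !mem_filter => /andP [/andP [rp _] _] /andP [/andP [rq _] _] /(congr1 val).
  by rewrite !valG; exact: deletion_mask_inj.
rewrite /subword_count -(size_map G) -(card_uniqP uniq_GS) -cardsE.
apply: eq_card => T; rewrite !inE; apply/mapP/eqP => [[p]|mT].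
  by rewrite mem_filter => /andP [/andP [rp /eqP <-] _] ->; rewrite valG mask_deletion_mask.
have sT : size T = size v by rewrite size_tuple.
have [cua cub] := inW_count uW; have [cva cvb] := inW_count vW.
have dropped x : count (pred1 x) (mask T v) + 1 = count (pred1 x) v ->
    count (pred1 x) (mask (map negb T) v) = 1.
  by rewrite -(count_mask_negb _ sT) => /eqP; rewrite eqn_add2l => /eqP.
have cT : count id T + 2 = size v by rewrite -(size_mask sT) mT su sv; lia.
have [p rp eT] := mask_drop2_deletion_mask sT cT
  (dropped letter_a ltac:(rewrite mT; lia)) (dropped letter_b ltac:(rewrite mT; lia)).
exists p; last by apply: val_inj; rewrite valG.
have /and4P [lt_j _ lt_i _] := rp; rewrite size_delete // sv in lt_i.
rewrite mem_filter rp mem_slots -mask_deletion_mask // -eT mT eqxx /=.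
by rewrite sv in lt_j; apply/andP; split; lia.
Qed.

Lemma sum_paths_through m r x w :
  \sum_(l <- schedules 0 (m + r)) ((build (take m l) == x) && (build l == w))
  = npaths m x * \sum_(l <- schedules m r) (run x l == w).
Proof.
rewrite big_schedules_cat /npaths big_distrl big_seq [RHS]big_seq.
apply: eq_bigr => l1 /size_schedules sl1; rewrite big_distrr.
apply: eq_bigr => l2 _; rewrite take_size_cat // build_cat.
by case: eqP => [->|_] /=; rewrite ?mul1n ?mul0n.
Qed.

Lemma sum_paths_through_step m r u v w :
  \sum_(l <- schedules 0 (m.+1 + r))
     [&& build (take m l) == u, build (take m.+1 l) == v & build l == w]
  = npaths m u * nsteps m u v * \sum_(l <- schedules m.+1 r) (run v l == w).
Proof.
rewrite big_schedules_cat add0n big_schedulesSr add0n /npaths /nsteps.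
rewrite !big_distrl big_seq [RHS]big_seq; apply: eq_bigr => l1 /size_schedules sl1 /=.
rewrite -mulnA big_distrl big_distrr; apply: eq_bigr => p _ /=.
rewrite !big_distrr; apply: eq_bigr => l2 _ /=.
have -> : take m.+1 (rcons l1 p ++ l2) = rcons l1 p.
  by rewrite take_size_cat ?size_rcons ?sl1.
have -> : take m (rcons l1 p ++ l2) = l1 by rewrite -cats1 -catA take_size_cat.
rewrite build_cat build_rcons.
by case: eqP => [->|_]; case: eqP => [->|_] /=; rewrite ?mul1n ?mul0n ?muln0.
Qed.

Section Outcomes.
Variable k : nat.

Definition choices (c : Omega k) : seq (nat * nat) :=
  [seq (val (c i).1, val (c i).2) | i <- enum 'I_k].

Lemma size_choices c : size (choices c) = k.
Proof. by rewrite size_map size_enum_ord. Qed.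

Lemma nth_choices c (i : 'I_k) :
  nth (0, 0) (choices c) i = (val (c i).1, val (c i).2).
Proof. by rewrite (nth_map i) ?size_enum_ord // nth_ord_enum. Qed.

Lemma U_choices c n : n <= k -> U c n = build (take n (choices c)).
Proof.
elim: n => [|n IHn] le_nk; first by rewrite take0.
have lt_nk : n < k by [].
rewrite (take_nth (0, 0)) ?size_choices // build_rcons -IHn 1?ltnW //.
by rewrite /= /choice_at insubT -(nth_choices c (Ordinal lt_nk)).
Qed.

Lemma choices_inj : injective choices.
Proof.
move=> c c' eq_cc'; apply/ffunP => i.
have := congr1 (fun l => nth (0, 0) l i) eq_cc'; rewrite /= !nth_choices => -[e1 e2].
by rewrite [c i]surjective_pairing [c' i]surjective_pairing; congr pair; apply: val_inj.
Qed.

Lemma choices_schedules c : valid c -> choices c \in schedules 0 k.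
Proof.
move=> /forallP cV; rewrite -(size_choices c); apply/schedulesP => t.
rewrite size_choices => lt_tk; have := cV (Ordinal lt_tk).
by rewrite -[t]/(val (Ordinal lt_tk)) nth_choices mem_slots add0n addn1.
Qed.

Lemma schedules_choices l : l \in schedules 0 k -> exists2 c, valid c & choices c = l.
Proof.
move=> lS; have sl := size_schedules lS.
have {lS} /schedulesP lS : l \in schedules 0 (size l) by rewrite sl.
rewrite sl in lS.
have lt2k (i : 'I_k) x : x <= (2 * i).+1 -> x < 2 * k by have := ltn_ord i; lia.
have le_k2k : k <= 2 * k by lia.
pose c : Omega k := [ffun i => (insubd (widen_ord le_k2k i) (nth (0, 0) l i).1,
                                insubd (widen_ord le_k2k i) (nth (0, 0) l i).2)].
have lS' (i : 'I_k) : ((nth (0, 0) l i).1 <= 2 * i) && ((nth (0, 0) l i).2 <= (2 * i).+1).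
  by have := lS i (ltn_ord i); rewrite mem_slots.
have cE (i : 'I_k) : (val (c i).1, val (c i).2) = nth (0, 0) l i.
  have /andP [le1 le2] := lS' i.
  rewrite ffunE !val_insubd (lt2k i _ (leqW le1)) (lt2k i _ le2).
  by case: (nth (0, 0) l i).
exists c.
  by apply/forallP => i; have := lS' i; rewrite -cE addn1.
apply: (@eq_from_nth _ (0, 0)) => [|t]; rewrite size_choices ?sl // => lt_tk.
by rewrite -[t]/(val (Ordinal lt_tk)) nth_choices cE.
Qed.

Lemma card_valid (Q : pred (seq (nat * nat))) :
  #|[set c : Omega k | valid c && Q (choices c)]| = \sum_(l <- schedules 0 k) Q l.
Proof.
have perm_choices : perm_eq [seq choices c | c <- enum (Omega k) & valid c] (schedules 0 k).
  apply: uniq_perm; first by rewrite (map_inj_uniq choices_inj) filter_uniq ?enum_uniq.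
    exact: uniq_schedules.
  move=> l; apply/mapP/idP => [[c] |/schedules_choices [c cV <-]].
    by rewrite mem_filter => /andP [cV _] ->; exact: choices_schedules.
  by exists c; rewrite // mem_filter cV mem_enum.
rewrite sum_count -(permP perm_choices) count_map count_filter cardsE cardE.
rewrite /enum_mem size_filter -enumT (@eq_filter _ _ predT) // filter_predT.
by apply: eq_count => c; rewrite /= andbC.
Qed.
End Outcomes.

Local Open Scope ring_scope.

Lemma ratio_cancel (R : numFieldType) (a b c d e : R) :
  0 < a * e * c / d -> a * b * c / d / (a * e * c / d) = b / e.
Proof.
move=> /lt0r_neq0; rewrite !mulf_eq0 !negb_or invr_eq0 => /andP [/andP [/andP [a0 e0] c0] d0].
by field; rewrite a0 e0 c0 d0.
Qed.

Theorem mainTheorem3 (k : nat) (w : seq bool) (hw : inW k w)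
    (m : nat) (hm : (m <= k - 1)%N) (hk : (0 < k)%N)
    (v u : seq bool) (hv : inW m.+1 v) (hu : inW m u)
    (hpos : 0 < Prob (fun c : Omega k => (U c m.+1 == v) && (U c k == w))) :
  CondProb (fun c : Omega k => U c m == u)
           (fun c : Omega k => (U c m.+1 == v) && (U c k == w))
  = (subword_count v u)%:R / ((m.+1 ^ 2)%N)%:R.
Proof.
have [r ek] : exists r, k = (m.+1 + r)%N by exists (k - m.+1)%N; lia.
subst k; set C := (\sum_(l <- schedules m.+1 r) (run v l == w))%N.
have U_last (c : Omega (m.+1 + r)) : U c (m.+1 + r) = build (choices c).
  by rewrite U_choices // take_oversize ?size_choices.
have card_through : #|[set c : Omega (m.+1 + r) |
    valid c && ((U c m.+1 == v) && (U c (m.+1 + r) == w))]| = (m`! ^ 2 * m.+1 ^ 2 * C)%N.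
  rewrite -expnMn [(m`! * _)%N]mulnC -factS -(npaths_inW hv) -sum_paths_through -card_valid.
  by apply: eq_card => c; rewrite !inE U_last U_choices ?leq_addr.
have card_through_step : #|[set c : Omega (m.+1 + r) | valid c &&
    ((U c m == u) && ((U c m.+1 == v) && (U c (m.+1 + r) == w)))]|
    = (m`! ^ 2 * subword_count v u * C)%N.
  rewrite -(npaths_inW hu) -(nsteps_subword_count hu hv) -sum_paths_through_step -card_valid.
  by apply: eq_card => c; rewrite !inE U_last !U_choices ?leq_addr // ltnW ?leq_addr.
move: hpos; rewrite /CondProb /Prob card_through card_through_step !natrM.
exact: ratio_cancel.
Qed.
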